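(* Let $\Bbbk$ be a field of characteristic $0$ and let $A=\Bbbk\bar Q_1$ be the path algebra of the quiver with vertices $\{1,2\}$ and arrows $t:1\to2$, $s:2\to1$, viewed as an algebra over $B=\Bbbk e_1\oplus\Bbbk e_2$. Any $B$-linear double quasi-Poisson bracket on $A$ which has degree at most $+4$ on generators must be one of the following: Case 1: $\{\!\{s,s\}\!\}=0$, $\{\!\{t,t\}\!\}=0$ and either (1.a) $\{\!\{t,s\}\!\}=\frac\delta2(st\otimes e_1-e_2\otimes ts)$ with $\delta\in\{\pm1\}$, or (1.b) $\{\!\{t,s\}\!\}=\gamma e_2\otimes e_1+\phi\,st\otimes ts+\alpha(st\otimes e_1+e_2\otimes ts)$ with $\alpha,\gamma,\phi\in\Bbbk$, $\alpha^2=\frac14+\gamma\phi$; Case 2: $\{\!\{s,s\}\!\}=0$, $\{\!\{t,t\}\!\}=\lambda(tst\otimes t-t\otimes tst)$ with $\lambda\in\Bbbk^\times$, and $\{\!\{t,s\}\!\}=\frac\delta2(st\otimes e_1-e_2\otimes ts)$ with $\delta\in\{\pm1\}$; Case 3: $\{\!\{t,t\}\!\}=0$, $\{\!\{s,s\}\!\}=\lambda(sts\otimes s-s\otimes sts)$ with $\lambda\in\Bbbk^\times$, and $\{\!\{t,s\}\!\}=\frac\delta2(st\otimes e_1-e_2\otimes ts)$ with $\delta\in\{\pm1\}$.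
   Context: The path algebra is generated by $e_1,e_2,t,s$ with $e_ie_j=\delta_{ij}e_i$, $e_1+e_2=1$, $t=e_1te_2$, $s=e_2se_1$. Grade $A$ by $|s|=|t|=1$ (idempotents in degree 0) and $A\otimes A$ by total degree; ''degree at most $+4$ on generators'' means each of $\{\!\{s,s\}\!\},\{\!\{t,t\}\!\},\{\!\{t,s\}\!\}$ is a sum of homogeneous terms of degree at most $4$. $\otimes=\otimes_\Bbbk$; Sweedler notation; outer structure $x(d'\otimes d'')y=xd'\otimes d''y$. A $B$-linear double bracket is a $\Bbbk$-bilinear map $A\times A\to A\otimes A$ vanishing when an argument lies in $B$, with $\{\!\{a,b\}\!\}=-\{\!\{b,a\}\!\}''\otimes\{\!\{b,a\}\!\}'$ and $\{\!\{a,bc\}\!\}=\{\!\{a,b\}\!\}c+b\{\!\{a,c\}\!\}$. Triple bracket: $\{\!\{a,b,c\}\!\}=\{\!\{a,\{\!\{b,c\}\!\}'\}\!\}\otimes\{\!\{b,c\}\!\}''+\tau\{\!\{b,\{\!\{c,a\}\!\}'\}\!\}\otimes\{\!\{c,a\}\!\}''+\tau^2\{\!\{c,\{\!\{a,b\}\!\}'\}\!\}\otimes\{\!\{a,b\}\!\}''$, $\tau(x_1\otimes x_2\otimes x_3)=x_3\otimes x_1\otimes x_2$. Quasi-Poisson: $\{\!\{a,b,c\}\!\}=\frac14\sum_{r=1,2}(ce_ra\otimes e_rb\otimes e_r-ce_ra\otimes e_r\otimes be_r-ce_r\otimes ae_rb\otimes e_r+ce_r\otimes ae_r\otimes be_r-e_ra\otimes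 e_rb\otimes e_rc+e_ra\otimes e_r\otimes be_rc+e_r\otimes ae_rb\otimes e_rc-e_r\otimes ae_r\otimes be_rc)$ for all $a,b,c$. *)

From HB Require Import structures.
From mathcomp Require Import all_boot all_order all_algebra.
From mathcomp Require Import finmap monalg.
Set Implicit Arguments. Unset Strict Implicit. Unset Printing Implicit Defensive.
Import GRing.Theory.
Local Open Scope ring_scope.

Section PathAlgebra.
Variable F : fieldType.

(* A nonzero path of the quiver is determined by its starting (left) vertex
   and its length: false = vertex 1, true = vertex 2.
   (false, 0) = e1, (true, 0) = e2, (false, 1) = t, (true, 1) = s,
   (false, 2) = ts, (true, 2) = st, (false, 3) = tst, ... *)
Definition qpath := (bool * nat)%type.

(* ending (right) vertex of a path: each arrow switches vertex *)
Definition pend (p : qpath) : bool := if odd p.2 then ~~ p.1 else p.1.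

(* A = kQ, with k-basis the paths; A (x) A and A (x) A (x) A over k have as
   k-bases the pairs / triples of paths. *)
Definition Alg := @malg qpath F.
Definition Alg2 := @malg (qpath * qpath)%type F.
Definition Alg3 := @malg (qpath * qpath * qpath)%type F.

Definition bilext (X Y Z : choiceType) (f : X -> Y -> (@malg Z F))
  (a : (@malg X F)) (b : (@malg Y F)) : (@malg Z F) :=
  \sum_(x <- msupp a) \sum_(y <- msupp b) (a@_x * b@_y) *: f x y.

Definition linext (X Z : choiceType) (f : X -> (@malg Z F))
  (a : (@malg X F)) : (@malg Z F) :=
  \sum_(x <- msupp a) a@_x *: f x.

(* product of paths (concatenation, left to right; zero if not composable) *)
Definition pmul (p q : qpath) : Alg :=
  if pend p == q.1 then << (p.1, (p.2 + q.2)%N) >> else 0.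

Definition amul (a b : Alg) : Alg := bilext pmul a b.

Definition tens (a b : Alg) : Alg2 := bilext (fun p q => << (p, q) >>) a b.
Definition tens21 (d : Alg2) (c : Alg) : Alg3 :=
  bilext (fun pq r => << (pq.1, pq.2, r) >>) d c.
Definition tens3 (a b c : Alg) : Alg3 := tens21 (tens a b) c.

Definition lact (x : Alg) (d : Alg2) : Alg2 :=
  linext (fun pq => tens (amul x << pq.1 >>) << pq.2 >>) d.
Definition ract (d : Alg2) (y : Alg) : Alg2 :=
  linext (fun pq => tens << pq.1 >> (amul << pq.2 >> y)) d.

Definition swap2 (d : Alg2) : Alg2 := linext (fun pq => << (pq.2, pq.1) >>) d.

Definition tau3 (u : Alg3) : Alg3 :=
  linext (fun x => << (x.2, x.1.1, x.1.2) >>) u.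

Definition e1 : Alg := << (false, 0%N) >>.
Definition e2 : Alg := << (true, 0%N) >>.
Definition tA : Alg := << (false, 1%N) >>.
Definition sA : Alg := << (true, 1%N) >>.

Definition is_B_double_bracket (br : Alg -> Alg -> Alg2) : Prop :=
  [/\ forall (k : F) a b c, br (k *: a + b) c = k *: br a c + br b c,
      forall (k : F) a b c, br a (k *: b + c) = k *: br a b + br a c,
      forall (c1 c2 : F) a,
        br (c1 *: e1 + c2 *: e2) a = 0 /\ br a (c1 *: e1 + c2 *: e2) = 0,
      forall a b, br a b = - swap2 (br b a) &
      forall a b c, br a (amul b c) = ract (br a b) c + lact b (br a c)].

(* {{a, d'}} (x) d''  for d = d' (x) d'' (Sweedler), extended linearly in d *)
Definition brL (br : Alg -> Alg -> Alg2) (a : Alg) (d : Alg2) : Alg3 :=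
  linext (fun pq => tens21 (br a << pq.1 >>) << pq.2 >>) d.

Definition triple_bracket (br : Alg -> Alg -> Alg2) (a b c : Alg) : Alg3 :=
  brL br a (br b c) + tau3 (brL br b (br c a))
  + tau3 (tau3 (brL br c (br a b))).

Local Notation "x *a y" := (amul x y) (at level 40, left associativity).

Definition qP_rhs (a b c : Alg) : Alg3 :=
  (4%:R : F)^-1 *: \sum_(e <- [:: e1; e2])
    (  tens3 (c *a e *a a) (e *a b) e
     - tens3 (c *a e *a a) e (b *a e)
     - tens3 (c *a e) (a *a e *a b) e
     + tens3 (c *a e) (a *a e) (b *a e)
     - tens3 (e *a a) (e *a b) (e *a c)
     + tens3 (e *a a) e (b *a e *a c)
     + tens3 e (a *a e *a b) (e *a c)
     - tens3 e (a *a e) (b *a e *a c)).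

Definition quasi_Poisson (br : Alg -> Alg -> Alg2) : Prop :=
  forall a b c, triple_bracket br a b c = qP_rhs a b c.

(* each homogeneous component (|s| = |t| = 1, total degree on A (x) A)
   has degree at most 4 *)
Definition deg_le4 (d : Alg2) : Prop :=
  forall pq, pq \in msupp d -> (pq.1.2 + pq.2.2 <= 4)%N.

End PathAlgebra.

Arguments e1 {F}. Arguments e2 {F}. Arguments tA {F}. Arguments sA {F}.

From HB Require Import structures.
From mathcomp Require Import all_boot all_order all_algebra.
From mathcomp Require Import finmap monalg.
From mathcomp.algebra_tactics Require Import ring.
From mathcomp Require Import zify.
Import GRing.Theory.
Local Open Scope ring_scope.

Set Implicit Arguments. Unset Strict Implicit. Unset Printing Implicit Defensive.

(* A B-linear double bracket is determined by its values on the arrows.  The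
   Leibniz rule against e1, e2, antisymmetry and the degree bound leave one
   coefficient lambda in {{t,t}} (on tst (x) t - t (x) tst; the t (x) t term
   dies since 2 != 0), one mu in {{s,s}}, and six in {{t,s}}, on e2 (x) e1,
   st (x) e1, e2 (x) ts, stst (x) e1, st (x) ts and e2 (x) tsts.  Extending
   to all paths by the Leibniz rule, the quasi-Poisson identity on triples of
   arrows becomes, coefficient by coefficient, a polynomial system in these
   eight numbers.  A dozen of its equations suffice: they kill the degree-4
   coefficients, give lambda mu = 0, force {{t,s}} = +-1/2 (st (x) e1 -
   e2 (x) ts) as soon as lambda or mu is nonzero, and otherwise leave exactly
   the family (1.b) or the same standard bracket. *)

(* Computations in [malg] are carried out on formal lists of
   (coefficient, basis element) pairs: every operation of the path algebra
   has a list counterpart that [cbv] evaluates, and [fcoef] reads off a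
   coefficient using a computable equality test. *)

Section FormalSums.
Variable F : fieldType.

Definition fsum (K : choiceType) (l : seq (F * K)) : @malg K F :=
  \sum_(x <- l) x.1 *: << x.2 >>.

Lemma fsum_nil (K : choiceType) : fsum (K:=K) [::] = 0.
Proof. by rewrite /fsum big_nil. Qed.

Lemma fsum_cons (K : choiceType) x (l : seq (F * K)) :
  fsum (x :: l) = x.1 *: << x.2 >> + fsum l.
Proof. by rewrite /fsum big_cons. Qed.

Lemma fsum_seq1 (K : choiceType) (x : F * K) : fsum [:: x] = x.1 *: << x.2 >>.
Proof. by rewrite /fsum big_seq1. Qed.

Lemma fsum_unit (K : choiceType) (k : K) : fsum [:: (1, k)] = << k >>.
Proof. by rewrite fsum_seq1 scale1r. Qed.

Lemma fsum_cat (K : choiceType) (l1 l2 : seq (F * K)) :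
  fsum (l1 ++ l2) = fsum l1 + fsum l2.
Proof. by rewrite /fsum big_cat. Qed.

Definition fscale (K : choiceType) (c : F) (l : seq (F * K)) :=
  [seq (c * x.1, x.2) | x <- l].

Lemma fsum_scale (K : choiceType) c (l : seq (F * K)) :
  fsum (fscale c l) = c *: fsum l.
Proof.
rewrite /fsum big_map scaler_sumr; apply: eq_bigr => x _.
by rewrite scalerA.
Qed.

Lemma big_seq_delta (K : eqType) (r : seq K) (g : K -> F) k : uniq r ->
  \sum_(z <- r) g z * (z == k)%:R = if k \in r then g k else 0.
Proof.
move=> ur; case: ifP => kr.
  rewrite (bigD1_seq k) //= eqxx mulr1 big1 ?addr0 // => z /negbTE ->.
  by rewrite mulr0.
rewrite big1_seq // => z /andP[_ zr]; case: eqP => [zk|]; last by rewrite mulr0.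
by move: kr; rewrite -zk zr.
Qed.

Lemma sum_msupp_delta (K : choiceType) (d : @malg K F) k W :
  \sum_(z <- msupp d) d@_z * ((z == k)%:R * W) = d@_k * W.
Proof.
under eq_bigr => z _ do rewrite mulrA.
rewrite -mulr_suml big_seq_delta ?fset_uniq //.
by case: ifP => // /negbT kd; rewrite mcoeff_outdom // mul0r.
Qed.

Lemma malg_fsum_supp (K : choiceType) (d : @malg K F) (S : seq K) : uniq S ->
  (forall k, d@_k != 0 -> k \in S) -> d = fsum [seq (d@_z, z) | z <- S].
Proof.
move=> uS HS; apply/malgP => k; symmetry.
rewrite /fsum raddf_sum big_map.
transitivity (\sum_(z <- S) d@_z * (z == k)%:R).
  by apply: eq_bigr => z _ /=; rewrite -mcoeffU; exact: mcoeffZ.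
rewrite (big_seq_delta (fun z => d@_z)) //; case: ifP => // kS.
by apply/esym/eqP; exact: (contraFT (@HS k) kS).
Qed.

Definition fcoef (K : choiceType) (eqk : K -> K -> bool) (k : K)
    (l : seq (F * K)) : F :=
  foldr (fun x acc => (if eqk x.2 k then x.1 else 0) + acc) 0 l.

Lemma mcoeff_fsum (K : choiceType) (eqk : K -> K -> bool) k l :
  (forall x y, eqk x y = (x == y)) -> (fsum l)@_k = fcoef eqk k l.
Proof.
move=> eqkE; elim: l => [|x l IH]; first by rewrite fsum_nil mcoeff0.
rewrite fsum_cons mcoeffD mcoeffZ mcoeffU IH /= eqkE.
by case: (x.2 == k); rewrite ?mulr1 ?mulr0.
Qed.

Section LinearExtension.
Variables X Z : choiceType.
Implicit Types f : X -> @malg Z F.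

Lemma linext_fsubset f (a : @malg X F) (D : {fset X}) : (msupp a `<=` D)%fset ->
  linext f a = \sum_(x <- D) a@_x *: f x.
Proof.
move=> sD; rewrite /linext; apply: big_fset_incl => // x _ xn.
by rewrite mcoeff_outdom // scale0r.
Qed.

Lemma linextD f a b : linext f (a + b) = linext f a + linext f b.
Proof.
rewrite (@linext_fsubset f (a + b) (msupp a `|` msupp b)%fset) ?msuppD_le //.
rewrite (@linext_fsubset f a (msupp a `|` msupp b)%fset) ?fsubsetUl //.
rewrite (@linext_fsubset f b (msupp a `|` msupp b)%fset) ?fsubsetUr //.
by rewrite -big_split /=; apply: eq_bigr => x _; rewrite mcoeffD scalerDl.
Qed.

Lemma linextZ f c a : linext f (c *: a) = c *: linext f a.
Proof.
rewrite (@linext_fsubset f (c *: a) (msupp a)) ?msuppZ_le // /linext scaler_sumr.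
by apply: eq_bigr => x _; rewrite mcoeffZ scalerA.
Qed.

Lemma linext0 f : linext f 0 = 0.
Proof. by rewrite /linext msupp0 big_seq_fset0. Qed.

Lemma linextU f x : linext f << x >> = f x.
Proof. by rewrite /linext msuppU oner_eq0 big_seq_fset1 mcoeffUU scale1r. Qed.

Lemma mcoeff_linext f d k :
  (linext f d)@_k = \sum_(z <- msupp d) d@_z * (f z)@_k.
Proof. by rewrite /linext raddf_sum; apply: eq_bigr => z _; exact: mcoeffZ. Qed.

Definition fbind (g : X -> seq (F * Z)) (l : seq (F * X)) :=
  flatten [seq fscale y.1 (g y.2) | y <- l].

Lemma linext_fbind f g l : (forall x, f x = fsum (g x)) ->
  linext f (fsum l) = fsum (fbind g l).
Proof.
move=> fg; elim: l => [|y l IH]; first by rewrite fsum_nil linext0 /fbind fsum_nil.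
by rewrite fsum_cons linextD linextZ linextU IH /fbind /= fsum_cat fsum_scale fg.
Qed.
End LinearExtension.

Definition fbind2 (X Y Z : choiceType) (g : X -> Y -> seq (F * Z)) l1 l2 :=
  fbind (fun x => fbind (g x) l2) l1.

Lemma bilext_linext (X Y Z : choiceType) (f : X -> Y -> @malg Z F) a b :
  bilext f a b = linext (fun x => linext (f x) b) a.
Proof.
rewrite /bilext /linext; apply: eq_bigr => x _; rewrite scaler_sumr.
by apply: eq_bigr => y _; rewrite scalerA.
Qed.

Lemma bilext_fbind2 (X Y Z : choiceType) (f : X -> Y -> @malg Z F) g l1 l2 :
  (forall x y, f x y = fsum (g x y)) ->
  bilext f (fsum l1) (fsum l2) = fsum (fbind2 g l1 l2).
Proof.
move=> fg; rewrite bilext_linext; apply: linext_fbind => x; exact: linext_fbind.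
Qed.

Lemma bilextUU (X Y Z : choiceType) (f : X -> Y -> @malg Z F) x y :
  bilext f << x >> << y >> = f x y.
Proof. by rewrite bilext_linext !linextU. Qed.

End FormalSums.

Section PathOperations.
Variable F : fieldType.

(* [Bool.eqb] and [Nat.add] rather than [==] and [addn], so that [cbv]
   reduces the list operations completely. *)
Definition lpmul (p q : qpath) : seq (F * qpath) :=
  if Bool.eqb (pend p) q.1 then [:: (1, (p.1, Nat.add p.2 q.2))] else [::].

Lemma amulUU p q : amul << p >> << q >> = pmul F p q.
Proof. by rewrite /amul bilextUU. Qed.

Definition lamul l1 l2 := fbind2 lpmul l1 l2.

Lemma amul_fsum l1 l2 : amul (fsum l1) (fsum l2) = fsum (lamul l1 l2).
Proof.
apply: bilext_fbind2 => p q; rewrite /pmul /lpmul.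
by case: (pend p); case: q.1; rewrite /= ?fsum_unit ?fsum_nil.
Qed.

Definition ltens (l1 l2 : seq (F * qpath)) :=
  fbind2 (fun p q => [:: (1, (p, q))]) l1 l2.

Lemma tens_fsum l1 l2 : tens (fsum l1) (fsum l2) = fsum (ltens l1 l2).
Proof. by apply: bilext_fbind2 => x y; rewrite fsum_unit. Qed.

Lemma tensUU p q : tens (F:=F) << p >> << q >> = << (p, q) >>.
Proof. by rewrite /tens bilextUU. Qed.

Definition ltens21 (d : seq (F * (qpath * qpath))) (c : seq (F * qpath)) :=
  fbind2 (fun pq r => [:: (1, (pq.1, pq.2, r))]) d c.

Lemma tens21_fsum l1 l2 : tens21 (fsum l1) (fsum l2) = fsum (ltens21 l1 l2).
Proof. by apply: bilext_fbind2 => x y; rewrite fsum_unit. Qed.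

Definition llact lx ld :=
  fbind (fun pq : qpath * qpath =>
    ltens (lamul lx [:: (1, pq.1)]) [:: (1, pq.2)]) ld.

Lemma lact_fsum lx ld : lact (fsum lx) (fsum ld) = fsum (llact lx ld).
Proof. by apply: linext_fbind => x; rewrite -!fsum_unit amul_fsum tens_fsum. Qed.

Definition lract ld ly :=
  fbind (fun pq : qpath * qpath =>
    ltens [:: (1, pq.1)] (lamul [:: (1, pq.2)] ly)) ld.

Lemma ract_fsum ld ly : ract (fsum ld) (fsum ly) = fsum (lract ld ly).
Proof. by apply: linext_fbind => x; rewrite -!fsum_unit amul_fsum tens_fsum. Qed.

Definition lswap (l : seq (F * (qpath * qpath))) :=
  fbind (fun pq : qpath * qpath => [:: (1, (pq.2, pq.1))]) l.

Lemma swap2_fsum l : swap2 (fsum l) = fsum (lswap l).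
Proof. by apply: linext_fbind => x; rewrite fsum_unit. Qed.

Definition ltau (l : seq (F * (qpath * qpath * qpath))) :=
  fbind (fun x : qpath * qpath * qpath => [:: (1, (x.2, x.1.1, x.1.2))]) l.

Lemma tau3_fsum l : tau3 (fsum l) = fsum (ltau l).
Proof. by apply: linext_fbind => x; rewrite fsum_unit. Qed.

Lemma brL_fsum br a (lbr : qpath -> seq (F * (qpath * qpath))) ld :
  (forall p, br a << p >> = fsum (lbr p)) ->
  brL br a (fsum ld) =
  fsum (fbind (fun pq : qpath * qpath => ltens21 (lbr pq.1) [:: (1, pq.2)]) ld).
Proof. by move=> brE; apply: linext_fbind => x; rewrite brE -fsum_unit tens21_fsum. Qed.

Definition qpath_eqb (p q : qpath) := Bool.eqb p.1 q.1 && eqn p.2 q.2.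

Definition qpath3_eqb (x y : qpath * qpath * qpath) :=
  [&& qpath_eqb x.1.1 y.1.1, qpath_eqb x.1.2 y.1.2 & qpath_eqb x.2 y.2].

Lemma qpath_eqbE p q : qpath_eqb p q = (p == q).
Proof.
case: p q => [b n] [c m]; rewrite /qpath_eqb /= xpair_eqE.
by case: b; case: c.
Qed.

Lemma qpath3_eqbE x y : qpath3_eqb x y = (x == y).
Proof.
case: x y => [[x1 x2] x3] [[y1 y2] y3].
by rewrite /qpath3_eqb /= !qpath_eqbE !xpair_eqE andbA.
Qed.

Lemma tens0l (b : Alg F) : tens 0 b = 0.
Proof. by rewrite /tens bilext_linext linext0. Qed.

Lemma tens0r p : tens (F:=F) << p >> 0 = 0.
Proof. by rewrite /tens bilext_linext linextU linext0. Qed.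

Lemma mcoeff_lact_idem v (d : Alg2 F) k :
  (lact << (v, 0%N) >> d)@_k = d@_k * (v == k.1.1)%:R.
Proof.
rewrite /lact mcoeff_linext -(sum_msupp_delta d k ((v == k.1.1)%:R)).
apply: eq_bigr => [[[b n] q]] _ /=; congr (_ * _).
rewrite amulUU /pmul /=.
case: (eqVneq v b) => [<-|vb].
  by rewrite add0n tensUU mcoeffU; case: eqP => [<-|]; rewrite ?eqxx ?mulr1 ?mul0r.
rewrite tens0l mcoeff0.
by case: eqP => [<-|] /=; rewrite ?(negbTE vb) ?mulr0 ?mul0r.
Qed.

Lemma mcoeff_ract_idem w (d : Alg2 F) k :
  (ract d << (w, 0%N) >>)@_k = d@_k * (pend k.2 == w)%:R.
Proof.
rewrite /ract mcoeff_linext -(sum_msupp_delta d k ((pend k.2 == w)%:R)).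
apply: eq_bigr => [[p [b n]]] _ /=; congr (_ * _).
rewrite amulUU /pmul /=.
case: (eqVneq (pend (b, n)) w) => [<-|vb].
  by rewrite addn0 tensUU mcoeffU; case: eqP => [<-|]; rewrite ?eqxx ?mulr1 ?mul0r.
rewrite tens0r mcoeff0.
by case: eqP => [<-|] /=; rewrite ?(negbTE vb) ?mulr0 ?mul0r.
Qed.

Lemma mcoeff_swap2 (d : Alg2 F) k : (swap2 d)@_k = d@_(k.2, k.1).
Proof.
rewrite /swap2 mcoeff_linext -[RHS]mulr1 -(sum_msupp_delta d (k.2, k.1) 1).
apply: eq_bigr => [[p q]] _ /=; congr (_ * _).
by rewrite mcoeffU mulr1; case: k => a b /=; rewrite !xpair_eqE andbC.
Qed.

End PathOperations.

Definition pE1 : qpath := (false, 0%N).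
Definition pE2 : qpath := (true, 0%N).
Definition pST : qpath := (true, 2%N).
Definition pTS : qpath := (false, 2%N).
Definition pTST : qpath := (false, 3%N).
Definition pSTS : qpath := (true, 3%N).
Definition pSTST : qpath := (true, 4%N).
Definition pTSTS : qpath := (false, 4%N).

Section ArrowBrackets.
Variable F : fieldType.

Definition lbr_ts (c00 c10 c01 c20 c11 c02 : F) : seq (F * (qpath * qpath)) :=
  [:: (c00, (pE2, pE1)); (c10, (pST, pE1)); (c01, (pE2, pTS));
      (c20, (pSTST, pE1)); (c11, (pST, pTS)); (c02, (pE2, pTSTS))].

Definition lbr_diag (x : bool) (lambda : F) : seq (F * (qpath * qpath)) :=
  [:: (lambda, ((x, 3%N), (x, 1%N))); (- lambda, ((x, 1%N), (x, 3%N)))].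

Definition lbr_arrows (lam mu c00 c10 c01 c20 c11 c02 : F) (a b : bool) :
    seq (F * (qpath * qpath)) :=
  match a, b with
  | false, false => lbr_diag false lam
  | true, true => lbr_diag true mu
  | false, true => lbr_ts c00 c10 c01 c20 c11 c02
  | true, false => fscale (-1) (lswap (lbr_ts c00 c10 c01 c20 c11 c02))
  end.

Variable br : Alg F -> Alg F -> Alg2 F.
Hypothesis brB : is_B_double_bracket br.

Lemma br_idem a v : br a << (v, 0%N) >> = 0.
Proof.
case: brB => _ _ brB0 _ _.
case: v; first by have [_] := brB0 0 1 a; rewrite scale0r add0r scale1r.
by have [_] := brB0 1 0 a; rewrite scale0r addr0 scale1r.
Qed.

Lemma br_supp_left a b v : amul << (v, 0%N) >> b = b ->
  forall k, (br a b)@_k != 0 -> k.1.1 = v.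
Proof.
move=> vb k; case: brB => _ _ _ _ brM.
have := brM a << (v, 0%N) >> b; rewrite vb br_idem /ract linext0 add0r => ->.
by rewrite mcoeff_lact_idem; case: (v =P k.1.1) => [->//|_]; rewrite mulr0 eqxx.
Qed.

Lemma br_supp_right a b w : amul b << (w, 0%N) >> = b ->
  forall k, (br a b)@_k != 0 -> pend k.2 = w.
Proof.
move=> bw k; case: brB => _ _ _ _ brM.
have := brM a b << (w, 0%N) >>; rewrite bw br_idem /lact linext0 addr0 => ->.
by rewrite mcoeff_ract_idem; case: (pend k.2 =P w) => [->//|_]; rewrite mulr0 eqxx.
Qed.

Lemma mcoeff_br_swap a b k : (br a b)@_k = - (br b a)@_(k.2, k.1).
Proof. by case: brB => _ _ _ brN _; rewrite brN mcoeffN mcoeff_swap2. Qed.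

(* The Leibniz rule against the idempotents at the ends of [y] (and, by
   antisymmetry, of [x]) puts the bracket in e_y A e_(end of x) (x)
   e_x A e_(end of y); the parity conditions record the ends. *)
Lemma arrow_br_supp x y k :
  deg_le4 (br << (x, 1%N) >> << (y, 1%N) >>) ->
  (br << (x, 1%N) >> << (y, 1%N) >>)@_k != 0 ->
  exists i j, [/\ k = ((y, i), (x, j)), odd i = (x == y), odd j = (x == y)
                & (i + j <= 4)%N].
Proof.
move=> deg nz.
have idem_arrow z : amul << (z, 0%N) >> << (z, 1%N) >> = << (z, 1%N) >> :> Alg F.
  by rewrite amulUU /pmul /= eqxx.
have arrow_idem z : amul << (z, 1%N) >> << (~~ z, 0%N) >> = << (z, 1%N) >> :> Alg F.
  by rewrite amulUU /pmul /= eqxx.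
have nz' : (br << (y, 1%N) >> << (x, 1%N) >>)@_(k.2, k.1) != 0.
  by rewrite -oppr_eq0 -mcoeff_br_swap.
have := br_supp_left (idem_arrow y) nz; have := br_supp_right (arrow_idem y) nz.
have := br_supp_left (idem_arrow x) nz'; have := br_supp_right (arrow_idem x) nz'.
have := deg k; rewrite -mcoeff_neq0 => /(_ nz).
case: k {nz nz'} => [[y' i] [x' j]] /= deg_ij endi x'E endj y'E.
rewrite x'E in endj; rewrite y'E in endi.
exists i, j; rewrite x'E y'E; split => //.
  by move: endi; rewrite /pend /=; case: (odd i); case: (x); case: (y).
by move: endj; rewrite /pend /=; case: (odd j); case: (x); case: (y).
Qed.

Lemma arrow_diag_supp x :
  deg_le4 (br << (x, 1%N) >> << (x, 1%N) >>) -> forall k,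
  (br << (x, 1%N) >> << (x, 1%N) >>)@_k != 0 ->
  k \in [:: ((x, 1%N), (x, 1%N)); ((x, 3%N), (x, 1%N)); ((x, 1%N), (x, 3%N))].
Proof.
move=> deg k /(arrow_br_supp deg) [i [j [-> + + ij]]]; rewrite eqxx.
case: i ij => [|[|[|[|[|i]]]]] ij; case: j ij => [|[|[|[|[|j]]]]] ij //= _ _;
  try lia; by rewrite !inE eqxx ?orbT.
Qed.

Lemma arrow_ts_supp : deg_le4 (br tA sA) -> forall k, (br tA sA)@_k != 0 ->
  k \in [:: (pE2, pE1); (pST, pE1); (pE2, pTS); (pSTST, pE1); (pST, pTS);
            (pE2, pTSTS)].
Proof.
move=> deg k /(arrow_br_supp deg) [i [j [-> + + ij]]] /=.
case: i ij => [|[|[|[|[|i]]]]] ij; case: j ij => [|[|[|[|[|j]]]]] ij //= _ _;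
  try lia; by rewrite !inE eqxx ?orbT.
Qed.

Hypothesis two_neq0 : (2%:R : F) != 0.

Lemma br_diag0 a p : (br a a)@_(p, p) = 0.
Proof.
move/eqP: (mcoeff_br_swap a a (p, p)).
by rewrite -addr_eq0 -mulr2n -mulr_natl mulf_eq0 (negbTE two_neq0) => /eqP.
Qed.

Lemma arrow_diag_shape x : deg_le4 (br << (x, 1%N) >> << (x, 1%N) >>) ->
  let lambda := (br << (x, 1%N) >> << (x, 1%N) >>)@_((x, 3%N), (x, 1%N)) in
  br << (x, 1%N) >> << (x, 1%N) >> = fsum (lbr_diag x lambda).
Proof.
move=> deg lambda; rewrite {1}(malg_fsum_supp _ (arrow_diag_supp deg)); last first.
  by rewrite /= !inE !xpair_eqE eqxx.
by rewrite /= br_diag0 (mcoeff_br_swap _ _ ((x, 1%N), (x, 3%N))) fsum_cons scale0r add0r.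
Qed.

Lemma arrow_brackets :
  deg_le4 (br sA sA) -> deg_le4 (br tA tA) -> deg_le4 (br tA sA) ->
  exists lam mu c00 c10 c01 c20 c11 c02, forall a b,
    br << (a, 1%N) >> << (b, 1%N) >> =
    fsum (lbr_arrows lam mu c00 c10 c01 c20 c11 c02 a b).
Proof.
move=> degss degtt degts.
have tsE : br tA sA =
    fsum (lbr_ts (br tA sA)@_(pE2, pE1) (br tA sA)@_(pST, pE1)
            (br tA sA)@_(pE2, pTS) (br tA sA)@_(pSTST, pE1)
            (br tA sA)@_(pST, pTS) (br tA sA)@_(pE2, pTSTS)).
  by rewrite {1}(malg_fsum_supp _ (arrow_ts_supp degts)).
do 8 eexists; case; case.
- exact: arrow_diag_shape.
- case: brB => _ _ _ brN _.
  by rewrite brN {1}tsE swap2_fsum -scaleN1r -fsum_scale.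
- exact: tsE.
- exact: arrow_diag_shape.
Qed.

End ArrowBrackets.

Section LeibnizExtension.
Variable F : fieldType.
Variables lam mu c00 c10 c01 c20 c11 c02 : F.
Local Notation lbr_gen := (lbr_arrows lam mu c00 c10 c01 c20 c11 c02).

(* {{x_a, p}} for the path p = (v, n), by the Leibniz rule applied to
   p = (v, n - 1) * (arrow at the end of (v, n - 1)). *)
Fixpoint lbr_path (a : bool) (v : bool) (n : nat) : seq (F * (qpath * qpath)) :=
  match n with
  | 0%N => [::]
  | n'.+1 => lract (lbr_path a v n') [:: (1, (pend (v, n'), 1%N))]
             ++ llact [:: (1, (v, n'))] (lbr_gen a (pend (v, n')))
  end.

Definition lbrL (a : bool) (ld : seq (F * (qpath * qpath))) :=
  fbind (fun pq : qpath * qpath =>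
    ltens21 (lbr_path a pq.1.1 pq.1.2) [:: (1, pq.2)]) ld.

Definition ltriple (a b c : bool) :=
  lbrL a (lbr_gen b c) ++ ltau (lbrL b (lbr_gen c a))
  ++ ltau (ltau (lbrL c (lbr_gen a b))).

Variable br : Alg F -> Alg F -> Alg2 F.
Hypothesis brB : is_B_double_bracket br.
Hypothesis brE : forall a b : bool,
  br << (a, 1%N) >> << (b, 1%N) >> = fsum (lbr_gen a b).

Lemma br_path_fsum a p : br << (a, 1%N) >> << p >> = fsum (lbr_path a p.1 p.2).
Proof.
case: p => v n /=; elim: n => [|n IH] /=; first by rewrite br_idem // fsum_nil.
have -> : << (v, n.+1) >> = amul << (v, n) >> << (pend (v, n), 1%N) >> :> Alg F.
  by rewrite amulUU /pmul eqxx /= addn1.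
case: brB => _ _ _ _ brM.
by rewrite brM IH brE -!fsum_unit ract_fsum lact_fsum fsum_cat.
Qed.

Lemma triple_bracket_fsum a b c :
  triple_bracket br << (a, 1%N) >> << (b, 1%N) >> << (c, 1%N) >> =
  fsum (ltriple a b c).
Proof.
have brP a' p : br << (a', 1%N) >> << p >> = fsum ((fun p => lbr_path a' p.1 p.2) p).
  exact: br_path_fsum.
by rewrite /triple_bracket !brE !(brL_fsum _ (brP _)) !tau3_fsum !fsum_cat addrA.
Qed.

End LeibnizExtension.

Section QuasiPoissonRhs.
Variable F : fieldType.
Local Notation "x *a y" := (amul x y) (at level 40, left associativity).
Local Notation "x *L y" := (@lamul F x y) (at level 40, left associativity).

Definition lt3 (x y z : seq (F * qpath)) := ltens21 (ltens x y) z.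

Definition lqP_term (a b c e : seq (F * qpath)) :=
  lt3 (c *L e *L a) (e *L b) e ++ fscale (-1) (lt3 (c *L e *L a) e (b *L e))
  ++ fscale (-1) (lt3 (c *L e) (a *L e *L b) e) ++ lt3 (c *L e) (a *L e) (b *L e)
  ++ fscale (-1) (lt3 (e *L a) (e *L b) (e *L c)) ++ lt3 (e *L a) e (b *L e *L c)
  ++ lt3 e (a *L e *L b) (e *L c) ++ fscale (-1) (lt3 e (a *L e) (b *L e *L c)).

Definition lqP_rhs (a b c : qpath) :=
  fscale 4%:R^-1 (lqP_term [:: (1, a)] [:: (1, b)] [:: (1, c)] [:: (1, pE1)]
                  ++ lqP_term [:: (1, a)] [:: (1, b)] [:: (1, c)] [:: (1, pE2)]).

Lemma lqP_term_fsum (a b c e : seq (F * qpath)) :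
  let a' := fsum a in let b' := fsum b in let c' := fsum c in let e' := fsum e in
    tens3 (c' *a e' *a a') (e' *a b') e'
  - tens3 (c' *a e' *a a') e' (b' *a e')
  - tens3 (c' *a e') (a' *a e' *a b') e'
  + tens3 (c' *a e') (a' *a e') (b' *a e')
  - tens3 (e' *a a') (e' *a b') (e' *a c')
  + tens3 (e' *a a') e' (b' *a e' *a c')
  + tens3 e' (a' *a e' *a b') (e' *a c')
  - tens3 e' (a' *a e') (b' *a e' *a c') = fsum (lqP_term a b c e).
Proof.
rewrite /= /lqP_term /lt3 /tens3 !amul_fsum !tens_fsum !tens21_fsum.
by rewrite !fsum_cat !fsum_scale !scaleN1r !addrA.
Qed.

Lemma qP_rhs_fsum a b c :
  qP_rhs (F:=F) << a >> << b >> << c >> = fsum (lqP_rhs a b c).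
Proof.
rewrite /qP_rhs /lqP_rhs big_cons big_seq1 /e1 /e2.
rewrite -[<< a >>]fsum_unit -[<< b >>]fsum_unit -[<< c >>]fsum_unit.
by rewrite -[<< (false, 0%N) >>]fsum_unit -[<< (true, 0%N) >>]fsum_unit
  fsum_scale fsum_cat -!lqP_term_fsum.
Qed.

End QuasiPoissonRhs.

Lemma eq_of_subr (F : zmodType) (x y u v : F) : x = y -> u - v = x - y -> u = v.
Proof. by move=> -> /eqP; rewrite subrr subr_eq0 => /eqP. Qed.

Section QuasiPoissonEquations.
Variable F : fieldType.
Variables lam mu c00 c10 c01 c20 c11 c02 : F.
Variable br : Alg F -> Alg F -> Alg2 F.
Hypothesis brB : is_B_double_bracket br.
Hypothesis brE : forall a b : bool,
  br << (a, 1%N) >> << (b, 1%N) >> =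
  fsum (lbr_arrows lam mu c00 c10 c01 c20 c11 c02 a b).
Hypothesis brqP : quasi_Poisson br.

Lemma qP_coef a b c k :
  fcoef qpath3_eqb k (ltriple lam mu c00 c10 c01 c20 c11 c02 a b c) =
  fcoef qpath3_eqb k (lqP_rhs F (a, 1%N) (b, 1%N) (c, 1%N)).
Proof.
by rewrite -!(mcoeff_fsum _ _ qpath3_eqbE) -(triple_bracket_fsum brB brE)
  -qP_rhs_fsum brqP.
Qed.

(* Proves a polynomial identity between the parameters by comparing the
   coefficients of both sides of the quasi-Poisson identity for the arrows
   (a, b, c) at the basis triple k. *)
Local Ltac qP_coef_eq a b c k :=
  let E := fresh "E" in
  have E := qP_coef a b c k;
  cbv [fcoef qpath3_eqb qpath_eqb ltriple lbrL fbind2 fbind fscale lswap ltau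
       ltens21 ltens lamul lpmul lract llact lbr_path lbr_arrows lbr_diag lbr_ts pend
       lqP_rhs lqP_term lt3 flatten map foldr cat fst snd Bool.eqb eqn andb
       negb odd Nat.add pE1 pE2 pST pTS pTST pSTS pSTST pTSTS] in E;
  first [apply: (eq_of_subr E); ring | apply: (eq_of_subr (esym E)); ring].

Lemma ts_c20_c02_eq0 : c20 = 0 /\ c02 = 0.
Proof.
have c20sq : c20 * c20 = 0.
  by qP_coef_eq false false true ((true, 6%N), (false, 1%N), (false, 0%N)).
have c02sq : c02 * c02 = 0.
  by qP_coef_eq false false true ((true, 0%N), (false, 1%N), (false, 6%N)).
by split; apply/eqP; rewrite -[_ == 0]orbb -mulf_eq0; apply/eqP.
Qed.

Lemma lam_mu_eq0 : lam * mu = 0.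
Proof.
have lam_mu : lam * mu = c20 * (c11 - lam).
  by qP_coef_eq false false true ((true, 4%N), (false, 1%N), (false, 2%N)).
by rewrite lam_mu (proj1 ts_c20_c02_eq0) mul0r.
Qed.

Lemma lam_neq0_coefs : lam != 0 -> [/\ mu = 0, c00 = 0, c11 = 0 & c01 = - c10].
Proof.
move=> lam_neq0; have [c20z c02z] := ts_c20_c02_eq0.
have lam_c00 : lam * c00 = c00 * (c02 - c20).
  by qP_coef_eq false false true ((true, 0%N), (false, 3%N), (false, 0%N)).
have lam_c11 : lam * c11 = 0.
  by qP_coef_eq false false true ((true, 2%N), (false, 3%N), (false, 2%N)).
have lam_c01c10 : lam * (c01 + c10) = 0.
  by qP_coef_eq false false false ((false, 3%N), (false, 1%N), (false, 1%N)).
rewrite c20z c02z subrr mulr0 in lam_c00.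
split; try by apply: (mulfI lam_neq0); rewrite mulr0 ?lam_mu_eq0.
by apply/eqP; rewrite -addr_eq0; apply/eqP/(mulfI lam_neq0); rewrite mulr0.
Qed.

Lemma mu_neq0_coefs : mu != 0 -> [/\ c00 = 0, c11 = 0 & c01 = - c10].
Proof.
move=> mu_neq0; have [c20z c02z] := ts_c20_c02_eq0.
have mu_c00 : mu * c00 = c00 * (c02 - c20).
  by qP_coef_eq false true true ((true, 0%N), (false, 0%N), (true, 3%N)).
have mu_c11 : mu * c11 = 0.
  by qP_coef_eq false true true ((true, 2%N), (false, 2%N), (true, 3%N)).
have mu_c01c10 : mu * (c01 + c10) = 0.
  by qP_coef_eq true true true ((true, 1%N), (true, 3%N), (true, 1%N)).
rewrite c20z c02z subrr mulr0 in mu_c00.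
split; try by apply: (mulfI mu_neq0); rewrite mulr0.
by apply/eqP; rewrite -addr_eq0; apply/eqP/(mulfI mu_neq0); rewrite mulr0.
Qed.

Lemma c10_sqr : c10 ^+ 2 = 4%:R^-1 + c00 * c11 + lam * c00.
Proof.
have c10sq : c10 ^+ 2 = 4%:R^-1 + c00 * (c11 - c20) + lam * c00.
  by qP_coef_eq false false true ((true, 2%N), (false, 1%N), (false, 0%N)).
by rewrite c10sq (proj1 ts_c20_c02_eq0) subr0.
Qed.

Lemma lam_eq0_coefs :
  lam = 0 -> c01 = c10 \/ [/\ c00 = 0, c11 = 0 & c01 = - c10].
Proof.
move=> lam0; have [_ c02z] := ts_c20_c02_eq0.
have c01sq : c01 ^+ 2 = 4%:R^-1 + c00 * (c11 - c02) - lam * c00.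
  by qP_coef_eq false false true ((true, 0%N), (false, 1%N), (false, 2%N)).
have c00d : c00 * (c10 - c01) = 0.
  by qP_coef_eq false false true ((true, 0%N), (false, 1%N), (false, 0%N)).
have c11d : c11 * (c10 - c01) = lam * (c01 + c10).
  by qP_coef_eq false false true ((true, 2%N), (false, 1%N), (false, 2%N)).
have [|c01_neq] := eqVneq c01 c10; [by left | right].
have d_neq0 : c10 - c01 != 0 by rewrite subr_eq0 eq_sym.
have c00z : c00 = 0 by apply: (mulIf d_neq0); rewrite mul0r.
have c11z : c11 = 0 by apply: (mulIf d_neq0); rewrite mul0r c11d lam0 mul0r.
have : (c10 - c01) * (c10 + c01) = 0.
  by rewrite -subr_sqr c10_sqr c01sq c00z c02z lam0; ring.
move/eqP; rewrite mulf_eq0 (negbTE d_neq0) addrC addr_eq0 => /eqP.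
by split.
Qed.

End QuasiPoissonEquations.

Section NormalForms.
Variable F : fieldType.

Lemma st_path : amul sA tA = << pST >> :> Alg F.
Proof. by rewrite amulUU. Qed.

Lemma ts_path : amul tA sA = << pTS >> :> Alg F.
Proof. by rewrite amulUU. Qed.

Lemma tst_path : amul (amul tA sA) tA = << pTST >> :> Alg F.
Proof. by rewrite ts_path amulUU. Qed.

Lemma sts_path : amul (amul sA tA) sA = << pSTS >> :> Alg F.
Proof. by rewrite st_path amulUU. Qed.

Lemma fsum_lbr_diag x (lambda : F) : fsum (lbr_diag x lambda) =
  lambda *: (tens << (x, 3%N) >> << (x, 1%N) >> - tens << (x, 1%N) >> << (x, 3%N) >>).
Proof. by rewrite /lbr_diag fsum_cons fsum_seq1 !tensUU scalerBr scaleNr. Qed.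

Lemma fsum_lbr_ts_anti (c : F) : fsum (lbr_ts 0 c (- c) 0 0 0) =
  c *: (tens (amul sA tA) e1 - tens e2 (amul tA sA)).
Proof.
(* Normalising over an abstract module: in [malg], unification would unfold
   the basis elements. *)
have comb (V : lmodType F) (u1 u2 u3 u4 u5 u6 : V) :
    0 *: u1 + (c *: u2 + (- c *: u3 + (0 *: u4 + (0 *: u5 + 0 *: u6)))) =
    c *: (u2 - u3).
  by rewrite !scale0r !addr0 add0r scalerBr scaleNr.
by rewrite /lbr_ts 5!fsum_cons fsum_seq1 [LHS]comb st_path ts_path /e1 /e2 !tensUU.
Qed.

Lemma fsum_lbr_ts_sym (g a p : F) : fsum (lbr_ts g a a 0 p 0) =
  g *: tens e2 e1 + p *: tens (amul sA tA) (amul tA sA)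
  + a *: (tens (amul sA tA) e1 + tens e2 (amul tA sA)).
Proof.
have comb (V : lmodType F) (u1 u2 u3 u4 u5 u6 : V) :
    g *: u1 + (a *: u2 + (a *: u3 + (0 *: u4 + (p *: u5 + 0 *: u6)))) =
    g *: u1 + p *: u5 + a *: (u2 + u3).
  rewrite !scale0r !addr0 add0r scalerDr -!addrA.
  by congr (_ + _); rewrite [RHS]addrC -addrA.
by rewrite /lbr_ts 5!fsum_cons fsum_seq1 [LHS]comb st_path ts_path /e1 /e2 !tensUU.
Qed.

Lemma sqr_eq_quarter (x : F) : x ^+ 2 = 4%:R^-1 -> x = 2%:R^-1 \/ x = - 2%:R^-1.
Proof.
have -> : (4%:R : F)^-1 = 2%:R^-1 ^+ 2 by rewrite exprVn -natrX.
by move/eqP; rewrite eqf_sqr => /orP[]/eqP; [left | right].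
Qed.

Lemma lbr_ts_anti_half (d : Alg2 F) (c : F) :
  c ^+ 2 = 4%:R^-1 -> d = fsum (lbr_ts 0 c (- c) 0 0 0) ->
  exists delta : F, (delta = 1 \/ delta = -1) /\
    d = (delta * 2%:R^-1) *: (tens (amul sA tA) e1 - tens e2 (amul tA sA)).
Proof.
move=> /sqr_eq_quarter [] -> ->; rewrite fsum_lbr_ts_anti.
  by exists 1; rewrite mul1r; split; [left|].
by exists (-1); rewrite mulN1r; split; [right|].
Qed.

End NormalForms.

Unset Implicit Arguments. Set Strict Implicit.

Theorem proposition4p4 (F : fieldType) (charF0 : [pchar F] =i pred0)
  (br : Alg F -> Alg F -> Alg2 F) :
  is_B_double_bracket br -> quasi_Poisson br ->
  deg_le4 (br sA sA) -> deg_le4 (br tA tA) -> deg_le4 (br tA sA) ->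
  let st := amul sA tA in let ts := amul tA sA in
  let tst := amul (amul tA sA) tA in let sts := amul (amul sA tA) sA in
  let half := (2%:R : F)^-1 in
  let bts_std := exists delta : F, (delta = 1 \/ delta = -1) /\
      br tA sA = (delta * half) *: (tens st e1 - tens e2 ts) in
  (* Case 1 *)
  (br sA sA = 0 /\ br tA tA = 0 /\
    (bts_std \/
     exists alpha gamma phi : F, alpha ^+ 2 = (4%:R : F)^-1 + gamma * phi /\
       br tA sA = gamma *: tens e2 e1 + phi *: tens st ts
                  + alpha *: (tens st e1 + tens e2 ts)))
  \/
  (* Case 2 *)
  (br sA sA = 0 /\
    (exists lambda : F, lambda != 0 /\
       br tA tA = lambda *: (tens tst tA - tens tA tst)) /\ bts_std)
  \/
  (* Case 3 *)
  (br tA tA = 0 /\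
    (exists lambda : F, lambda != 0 /\
       br sA sA = lambda *: (tens sts sA - tens sA sts)) /\ bts_std).
Proof.
move=> brB brqP degss degtt degts st ts tst sts half bts_std.
have two_neq0 : (2%:R : F) != 0 by move/pcharf0P: charF0 => ->.
have [lam [mu [c00 [c10 [c01 [c20 [c11 [c02 brE]]]]]]]] :=
  arrow_brackets brB two_neq0 degss degtt degts.
have [c20z c02z] := ts_c20_c02_eq0 brB brE brqP.
have c10sq := c10_sqr brB brE brqP.
have [ttE ssE tsE] : [/\ br tA tA = lam *: (tens tst tA - tens tA tst),
    br sA sA = mu *: (tens sts sA - tens sA sts)
    & br tA sA = fsum (lbr_ts c00 c10 c01 0 c11 0)].
  by rewrite !brE /= !fsum_lbr_diag /tst /sts tst_path sts_path c20z c02z.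
have std_ts : c00 = 0 -> c11 = 0 -> c01 = - c10 -> bts_std.
  move=> c00z c11z c01E; apply: (lbr_ts_anti_half (c := c10)).
    by rewrite c10sq c00z mul0r mulr0 !addr0.
  by rewrite tsE c00z c11z c01E.
have [lam0|lam_neq0] := eqVneq lam 0; last first.
  have [mu0 c00z c11z c01E] := lam_neq0_coefs brB brE brqP lam_neq0.
  right; left; split; first by rewrite ssE mu0 scale0r.
  by split; [exists lam; split | exact: std_ts].
have [mu0|mu_neq0] := eqVneq mu 0; last first.
  have [c00z c11z c01E] := mu_neq0_coefs brB brE brqP mu_neq0.
  right; right; split; first by rewrite ttE lam0 scale0r.
  by split; [exists mu; split | exact: std_ts].
left; split; first by rewrite ssE mu0 scale0r.
split; first by rewrite ttE lam0 scale0r.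
have [c01E|[c00z c11z c01E]] := lam_eq0_coefs brB brE brqP lam0; last first.
  by left; exact: std_ts.
right; exists c10, c00, c11; split; first by rewrite c10sq lam0 mul0r addr0.
by rewrite tsE c01E fsum_lbr_ts_sym.
Qed.
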